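(* For any deterministic MDP with effective planning window $W$, there is an RL algorithm (which may depend on $W$) whose sample complexity on this MDP is at most $T^2A^W$.
   Context: Deterministic finite-horizon MDP $\mathcal M=(\mathcal S,\mathcal A,T,s_1,f,R)$: finite states, actions with $A=|\mathcal A|$, start state $s_1$, transitions $s_{t+1}=f(s_t,a_t)$, rewards $R(s_t,a_t)$, steps $t\in[T]$, no discounting; a policy is optimal if it maximizes $J(\pi)=\mathbb E_\pi[\sum_{t=1}^TR(s_t,a_t)]$. An RL algorithm knows $\mathcal A$ and $T$, interacts only by running episodes from $s_1$ (observing states and rewards), each episode counting $T$ timesteps; its sample complexity is the least $n$ such that its output after $n$ timesteps is optimal with probability at least $1/2$. Q-value iteration: $Q'=\mathrm{QVI}(Q)$ with $Q'_t(s,a)=R(s,a)+\max_{a'}Q_{t+1}(f(s,a),a')$ for $t<T$, $Q'_T(s,a)=R(s,a)$; $\Pi(Q)$ is the set of deterministic policies with $\pi_t(s)\in\arg\max_aQ_t(s,a)$ for all $s,t$. Define $Q^1_t(s,a)=R(s,a)$ for all $t$ and $Q^i=\mathrm{QVI}(Q^{i-1})$ for $i=2,\dots,T$. The effective planning window $W$ is the least $W\in[T]$ such that every policy in $\Pi(Q^W)$ is optimal. *)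

From mathcomp Require Import all_boot all_order all_algebra.
Set Implicit Arguments. Unset Strict Implicit. Unset Printing Implicit Defensive.
Import Order.TTheory GRing.Theory Num.Theory.
Local Open Scope ring_scope.

Section MDP.
Variable R : realFieldType.

Record dmdp (S : finType) (A : nat) := DMDP {
  start : S;
  trans : S -> 'I_A -> S;
  rew   : S -> 'I_A -> R }.

(* deterministic Markov policies pi t s (steps t = 1..T; other t irrelevant) *)
Definition policy (S : finType) (A : nat) := nat -> S -> 'I_A.

(* maximum of a function over the (nonempty) action set; 0 if A = 0 *)
Definition amax (A : nat) : ('I_A -> R) -> R :=
  match A as n return ('I_n -> R) -> R with
  | 0 => fun _ => 0
  | n.+1 => fun g => \big[Num.max/g ord0]_(a < n.+1) g a
  end.

Section Fixed.
Variables (S : finType) (A T : nat) (M : dmdp S A).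

Fixpoint ret (pi : policy S A) (k t : nat) (s : S) : R :=
  match k with
  | 0 => 0
  | k'.+1 => rew M s (pi t s) + ret pi k' t.+1 (trans M s (pi t s))
  end.

Definition J (pi : policy S A) : R := ret pi T 1 (start M).

Definition optimal (pi : policy S A) : Prop :=
  forall pi' : policy S A, J pi' <= J pi.

Definition qfun := nat -> S -> 'I_A -> R.

Definition QVI (Q : qfun) : qfun := fun t s a =>
  if (t < T)%N then rew M s a + amax (fun a' => Q t.+1 (trans M s a) a')
  else rew M s a.

Definition greedy (Q : qfun) (pi : policy S A) : Prop :=
  forall t, (1 <= t <= T)%N -> forall s a, Q t s a <= Q t s (pi t s).

(* Q^1_t(s,a) = R(s,a);  Q^i = QVI(Q^{i-1}) *)
Definition Qit (i : nat) : qfun := iter i.-1 QVI (fun _ s a => rew M s a).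

Definition window_ok (W : nat) : Prop :=
  forall pi, greedy (Qit W) pi -> optimal pi.

Definition eff_window (W : nat) : Prop :=
  [/\ (1 <= W <= T)%N, window_ok W &
      forall W', (1 <= W' < W)%N -> ~ window_ok W'].
End Fixed.

Definition obs (S : eqType) (A : nat) := (S * 'I_A * R)%type.

(* A deterministic episodic RL algorithm that knows the action set 'I_A
   (and T, through the choice of the algorithm) but not the MDP; it can only
   compare observed states for equality.
   - act H cur s : action taken in the current episode, given the completed
     episodes H, the current partial episode cur and the current state s;
   - out H : the policy output after the completed episodes H. *)
Record algo (A : nat) (S : eqType) := Algo {
  act : seq (seq (obs S A)) -> seq (obs S A) -> S -> 'I_A;
  out : seq (seq (obs S A)) -> nat -> S -> 'I_A }.

Section Run.
Variables (S : finType) (A T : nat) (M : dmdp S A) (alg : algo A S).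

Fixpoint run_ep (H : seq (seq (obs S A))) (k : nat) (cur : seq (obs S A))
    (s : S) : seq (obs S A) :=
  match k with
  | 0 => cur
  | k'.+1 => let a := act alg H cur s in
             run_ep H k' (rcons cur (s, a, rew M s a)) (trans M s a)
  end.

Definition episode (H : seq (seq (obs S A))) := run_ep H T [::] (start M).

Fixpoint history (n : nat) : seq (seq (obs S A)) :=
  match n with
  | 0 => [::]
  | n'.+1 => let H := history n' in rcons H (episode H)
  end.

(* sample complexity of alg on M is at most B: some number of timesteps
   n * T <= B after which the output is optimal (deterministic algorithm,
   so "with probability >= 1/2" means "surely") *)
Definition sample_complexity_le (B : nat) : Prop :=
  exists n, (n * T <= B)%N /\ optimal T M (out alg (history n)).
End Run.
End MDP.

From Stdlib Require Import FunctionalExtensionality.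
From mathcomp Require Import all_boot all_order all_algebra zify.
Set Implicit Arguments. Unset Strict Implicit. Unset Printing Implicit Defensive.
Import Order.TTheory GRing.Theory Num.Theory.
Local Open Scope ring_scope.

(* Unfolding Q-value iteration shows that Q^W_t(s,a) is the best total reward
   of an open-loop action sequence of length W started at step t in s with
   action a, truncated at the horizon T ([lookahead_le_Qit], [Qit_attained]).
   Since the MDP is deterministic, such a value can be measured exactly by
   playing the sequence once.  The algorithm [explorer] therefore proceeds in
   T phases of A^W episodes each: in phase t it replays the actions committed
   in phases 1..t-1, then tries every word w in 'I_A^W from step t, and
   commits to the first letter of the word of largest observed W-step score.
   The committed actions are greedy for Q^W along the committed trajectory
   ([commit_greedy]); extending them off that trajectory by arbitrary greedy
   choices gives a policy in Pi(Q^W), hence optimal by definition of W, with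
   the same return as the open-loop output of the algorithm.  That output is
   available after T * A^W episodes, i.e. T^2 A^W timesteps. *)

Section ActionMax.
Variable R : realFieldType.

Lemma amax_ge (A : nat) (g : 'I_A -> R) a : g a <= amax g.
Proof. by case: A g a => [|n] g [] //= m Hm; rewrite le_bigmax. Qed.

Lemma amax_attained (A : nat) (g : 'I_A -> R) : (0 < A)%N -> exists a, amax g = g a.
Proof.
case: A g => [|n] g // _; exists (Order.arg_max ord0 xpredT g).
case: arg_maxP => //= i _ Hi; apply/eqP; rewrite eq_le le_bigmax andbT.
by apply: bigmax_le => [|j _]; apply: Hi.
Qed.
End ActionMax.

Section Lookahead.
Variables (R : realFieldType) (S : finType) (A T : nat) (M : dmdp R S A).

Fixpoint lookahead (i t : nat) (s : S) (g : nat -> 'I_A) : R :=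
  match i with
  | 0 => 0
  | i'.+1 => rew M s (g t) +
             (if (t < T)%N then lookahead i' t.+1 (trans M s (g t)) g else 0)
  end.

Lemma lookahead_ext i t s g h :
  (forall n, (t <= n < t + i)%N -> g n = h n) -> lookahead i t s g = lookahead i t s h.
Proof.
elim: i t s => [|i IH] t s E //=.
have -> : g t = h t by apply: E; lia.
by congr (_ + _); case: ifP => // _; apply: IH => n Hn; apply: E; lia.
Qed.

Lemma lookaheadS i t s g : (t < T)%N ->
  lookahead i.+1 t s g = rew M s (g t) + lookahead i t.+1 (trans M s (g t)) g.
Proof. by move=> /= ->. Qed.

Lemma QitS i : Qit T M i.+2 = QVI T M (Qit T M i.+1).
Proof. by []. Qed.

Lemma lookahead_le_Qit i t s g :
  lookahead i.+1 t s g <= Qit T M i.+1 t s (g t).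
Proof.
elim: i t s => [|i IH] t s; first by rewrite /= if_same addr0.
rewrite QitS /QVI /=; case: ifP => _; last by rewrite addr0.
by rewrite lerD2l (le_trans (IH _ _)) ?amax_ge.
Qed.

Lemma Qit_attained i t s a : (0 < A)%N ->
  exists g, g t = a /\ lookahead i.+1 t s g = Qit T M i.+1 t s a.
Proof.
move=> hA; elim: i t s a => [|i IH] t s a.
  by exists (fun _ => a); rewrite /= if_same addr0.
rewrite QitS /QVI.
case Ht: (t < T)%N; last by exists (fun _ => a); rewrite /= Ht addr0.
have [a' ->] := amax_attained (fun a' => Qit T M i.+1 t.+1 (trans M s a) a') hA.
have [g [g_a' <-]] := IH t.+1 (trans M s a) a'.
exists (fun n => if n == t then a else g n); rewrite eqxx lookaheadS // eqxx.
by split => //; congr (_ + _); apply: lookahead_ext => n Hn; rewrite ifN //; lia.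
Qed.
End Lookahead.

Section Explorer.
Variables (R : realFieldType) (A W : nat).
Hypothesis hA : (0 < A)%N.

Local Notation word := {ffun 'I_W -> 'I_A}.

Definition default_action : 'I_A := Ordinal hA.

Definition nwords : nat := #|{: word}|.

Definition word_action (w : word) (m : nat) : 'I_A :=
  if insub m is Some i then w i else default_action.

Definition word_index (w : word) : nat := index w (enum {: word}).

Definition word_at (k : nat) : word := nth [ffun=> default_action] (enum {: word}) k.

Definition reward_sum (S : eqType) (l : seq (obs R S A)) : R := \sum_(x <- l) x.2.

Definition window_score (S : eqType) (ep : seq (obs R S A)) (t : nat) : R :=
  reward_sum (take W (drop t.-1 ep)).

(* Index of the episode that tries the word w from step t. *)
Definition explore_episode (t : nat) (w : word) : nat := (t.-1 * nwords + word_index w)%N.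

Definition word_score (S : eqType) (L : nat -> seq (obs R S A)) (t : nat) (w : word) : R :=
  window_score (L (explore_episode t w)) t.

Definition committed (S : eqType) (L : nat -> seq (obs R S A)) (t : nat) : 'I_A :=
  word_action (Order.arg_max [ffun=> default_action] xpredT (word_score L t)) 0.

(* Action at step t of the next episode after the history H: with phase p
   and word number k given by size H = (p - 1) * nwords + k, replay the
   committed actions before step p and the k-th word from step p on. *)
Definition explore_action (S : eqType) (H : seq (seq (obs R S A))) (t : nat) : 'I_A :=
  let phase := (size H %/ nwords).+1 in
  if (t < phase)%N then committed (nth [::] H) t
  else word_action (word_at (size H %% nwords)) (t - phase).

Definition explorer (S : eqType) : algo R A S :=
  Algo (fun H cur _ => explore_action H (size cur).+1)
       (fun H t _ => committed (nth [::] H) t).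

Lemma nwords_eq : nwords = (A ^ W)%N.
Proof. by rewrite /nwords card_ffun !card_ord. Qed.

Lemma word_index_lt w : (word_index w < nwords)%N.
Proof. by rewrite /word_index /nwords cardE index_mem mem_enum. Qed.

Lemma word_at_index w : word_at (word_index w) = w.
Proof. by rewrite /word_at /word_index nth_index // mem_enum. Qed.

Lemma word_action_lt w m (Hm : (m < W)%N) : word_action w m = w (Ordinal Hm).
Proof. by rewrite /word_action insubT. Qed.

Lemma explore_episode_divmod t w :
  (explore_episode t w %/ nwords = t.-1)%N /\ (explore_episode t w %% nwords = word_index w)%N.
Proof.
have Hw := word_index_lt w; have N0 : (0 < nwords)%N by case: (nwords) Hw.
by rewrite /explore_episode divnMDl // modnMDl divn_small // modn_small // addn0.
Qed.

Lemma committed_stable (S : eqType) (L1 L2 : nat -> seq (obs R S A)) t : (0 < t)%N ->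
  (forall e, (e < t * nwords)%N -> L1 e = L2 e) -> committed L1 t = committed L2 t.
Proof.
move=> t0 E; rewrite /committed; congr (word_action (Order.arg_max _ _ _) 0).
apply: functional_extensionality => w; rewrite /word_score E //.
have := word_index_lt w; rewrite /explore_episode; case: t t0 {E} => [|t] //= _; lia.
Qed.

Section Run.
Variables (S : finType) (T : nat) (M : dmdp R S A).

Fixpoint schedule_obs (g : nat -> 'I_A) (k t : nat) (s : S) : seq (obs R S A) :=
  match k with
  | 0 => [::]
  | k'.+1 => (s, g t, rew M s (g t)) :: schedule_obs g k' t.+1 (trans M s (g t))
  end.

Fixpoint schedule_state (g : nat -> 'I_A) (m t : nat) (s : S) : S :=
  match m with
  | 0 => s
  | m'.+1 => schedule_state g m' t.+1 (trans M s (g t))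
  end.

Lemma schedule_stateS g m t s :
  schedule_state g m.+1 t s = trans M (schedule_state g m t s) (g (t + m)%N).
Proof. by elim: m t s => [|m IH] t s; rewrite ?addn0 // -addSnnS; apply: IH. Qed.

Lemma drop_schedule_obs g m k t s :
  drop m (schedule_obs g (m + k) t s) = schedule_obs g k (t + m) (schedule_state g m t s).
Proof. by elim: m t s => [|m IH] t s /=; rewrite ?drop0 ?addn0 // IH addSnnS. Qed.

Lemma reward_sum_schedule g i k t s : (0 < k)%N -> (t + k = T.+1)%N ->
  reward_sum (take i (schedule_obs g k t s)) = lookahead T M i t s g.
Proof.
elim: i k t s => [|i IH] [|k] t s // _ Hk; first by rewrite take0 /reward_sum big_nil.
rewrite /reward_sum /= big_cons /=; congr (_ + _); case: ltnP => Ht.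
  by apply: IH; lia.
have -> : k = 0%N by lia.
by rewrite /= big_nil.
Qed.

Lemma run_ep_schedule (alg : algo R A S) H g :
  (forall cur s, act alg H cur s = g (size cur).+1) ->
  forall k cur s, run_ep M alg H k cur s = cur ++ schedule_obs g k (size cur).+1 s.
Proof.
move=> Hg; elim=> [|k IH] cur s /=; first by rewrite cats0.
by rewrite IH size_rcons Hg cat_rcons.
Qed.

Lemma size_history alg n : size (history T M alg n) = n.
Proof. by elim: n => //= n IH; rewrite size_rcons IH. Qed.

Lemma nth_history alg n e : (e < n)%N ->
  nth [::] (history T M alg n) e = episode T M alg (history T M alg e).
Proof.
elim: n => // n IH; rewrite ltnS leq_eqVlt => /orP[/eqP->|He] /=.
  by rewrite nth_rcons size_history ltnn eqxx.
by rewrite nth_rcons size_history He IH.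
Qed.

End Run.

Section Correctness.
Variables (S : finType) (T : nat) (M : dmdp R S A).

Local Notation hist := (history T M (explorer S)).

Definition final_history := hist (T * nwords).

Definition commit (t : nat) : 'I_A := committed (nth [::] final_history) t.

Fixpoint commit_state (n : nat) : S :=
  if n is n'.+1 then trans M (commit_state n') (commit n) else start M.

Lemma episode_schedule e :
  episode T M (explorer S) (hist e) = schedule_obs M (explore_action (hist e)) T 1 (start M).
Proof. exact: run_ep_schedule. Qed.

Lemma explore_action_history t w n : (1 <= t <= T)%N -> (1 <= n)%N ->
  explore_action (hist (explore_episode t w)) n =
  if (n < t)%N then commit n else word_action w (n - t).
Proof.
move=> /andP[t1 tT] n1; have [Hdiv Hmod] := explore_episode_divmod t w.
rewrite /explore_action size_history Hdiv Hmod (prednK t1) word_at_index.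
case: ifP => // nt; apply: committed_stable => // e He.
have Hn : (n * nwords <= t.-1 * nwords)%N by rewrite leq_mul2r; apply/orP; right; lia.
have HT : (t.-1 * nwords <= T * nwords)%N by rewrite leq_mul2r; apply/orP; right; lia.
by rewrite !nth_history // /explore_episode; lia.
Qed.

Lemma schedule_state_commit g m : (forall n, (1 <= n <= m)%N -> g n = commit n) ->
  schedule_state M g m 1 (start M) = commit_state m.
Proof.
elim: m => [|m IH] Hg //; rewrite schedule_stateS IH /= ?add1n ?Hg //.
  by rewrite leqnn.
by move=> n /andP[n1 nm]; apply: Hg; rewrite n1 ltnW.
Qed.

Lemma word_score_lookahead t w : (1 <= t <= T)%N ->
  word_score (nth [::] final_history) t w =
  lookahead T M W t (commit_state t.-1) (fun n => word_action w (n - t)).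
Proof.
move=> Ht; have /andP[t1 tT] := Ht.
have He : (explore_episode t w < T * nwords)%N.
  have Hw := word_index_lt w.
  have : (t.-1 * nwords + nwords <= T * nwords)%N by rewrite addnC -mulSn prednK // leq_mul2r tT orbT.
  by rewrite /explore_episode; lia.
rewrite /word_score /window_score nth_history // episode_schedule.
set g := explore_action _.
rewrite -[in schedule_obs _ _ T](@subnKC t.-1 T); last by lia.
rewrite drop_schedule_obs (reward_sum_schedule (T := T)); [|lia|lia].
rewrite add1n (prednK t1) schedule_state_commit => [|n Hn]; last first.
  by rewrite /g explore_action_history ?ifT //; lia.
by apply: lookahead_ext => n Hn; rewrite /g explore_action_history ?ifF //; lia.
Qed.

Lemma commit_greedy t a : (0 < W)%N -> (1 <= t <= T)%N ->
  Qit T M W t (commit_state t.-1) a <= Qit T M W t (commit_state t.-1) (commit t).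
Proof.
move=> W0 Ht; set s := commit_state t.-1.
have [g [g_a]] := Qit_attained T M W.-1 t s a hA; rewrite (prednK W0) => <-.
pose w : word := [ffun m : 'I_W => g (t + m)%N].
have -> : lookahead T M W t s g = lookahead T M W t s (fun n => word_action w (n - t)).
  apply: lookahead_ext => n Hn; have Hm : (n - t < W)%N by lia.
  by rewrite (word_action_lt w Hm) ffunE /= subnKC //; lia.
rewrite -(word_score_lookahead w Ht) /commit /committed.
case: arg_maxP => //= best _ best_max; apply: le_trans (best_max w isT) _.
rewrite (word_score_lookahead best Ht).
by have := lookahead_le_Qit T M W.-1 t s (fun n => word_action best (n - t)); rewrite subnn (prednK W0).
Qed.

Definition greedy_completion : policy S A := fun t s =>
  if (1 <= t <= T)%N && (s == commit_state t.-1) then commit t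
  else Order.arg_max default_action xpredT (Qit T M W t s).

Lemma greedy_completion_greedy : (0 < W)%N -> greedy T (Qit T M W) greedy_completion.
Proof.
move=> W0 t Ht s a; rewrite /greedy_completion Ht /=.
case: eqP => [->|_]; first exact: commit_greedy.
by case: arg_maxP => //= b _; apply.
Qed.

Lemma ret_greedy_completion k t : (1 <= t)%N -> (t + k <= T.+1)%N ->
  ret M greedy_completion k t (commit_state t.-1) =
  ret M (out (explorer S) final_history) k t (commit_state t.-1).
Proof.
elim: k t => [|k IH] t // t1 Hk /=.
have -> : greedy_completion t (commit_state t.-1) = commit t.
  by rewrite /greedy_completion t1 eqxx /=; case: ifP => //; lia.
have -> : trans M (commit_state t.-1) (commit t) = commit_state t.+1.-1.
  by case: t t1 {IH Hk}.
by congr (_ + _); apply: IH => //; lia.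
Qed.

Lemma explorer_optimal : (0 < W)%N -> window_ok T M W ->
  optimal T M (out (explorer S) final_history).
Proof.
move=> W0 ok pi; apply: le_trans (ok _ (greedy_completion_greedy W0) pi) _.
by rewrite /J (ret_greedy_completion (k := T) (t := 1)).
Qed.
End Correctness.
End Explorer.

Theorem mainTheorem12 (R : realFieldType) (A T W : nat) :
  (0 < A)%N -> (0 < T)%N ->
  exists alg : forall S : eqType, algo R A S,
    forall (S : finType) (M : dmdp R S A),
      eff_window T M W ->
      sample_complexity_le T M (alg S) (T ^ 2 * A ^ W).
Proof.
move=> hA _; exists (explorer R W hA) => S M [/andP[W1 _] ok _].
exists (T * nwords A W)%N; split; first by rewrite nwords_eq mulnAC mulnn.
exact: explorer_optimal.
Qed.
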